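(* Let $\mathcal L=(\Sigma,X)$ be a language and $\Lambda$ a fuzzy theory in $\mathcal L$. Then the forgetful functor $\mathscr U_\Lambda:\mathbf{Mod}(\Lambda)\to\mathbf{Fuz}_H$ has a left adjoint $\mathscr F_\Lambda$; i.e. for every $H$-fuzzy set $(M,\mu_M)$ there is a model $\mathscr F_\Lambda(M,\mu_M)$ of $\Lambda$ and an arrow $\eta:(M,\mu_M)\to\mathscr U_\Lambda(\mathscr F_\Lambda(M,\mu_M))$ such that for every model $\mathcal B$ of $\Lambda$ and every arrow $g:(M,\mu_M)\to\mathscr U_\Lambda(\mathcal B)$ there is a unique morphism of $\Sigma$-algebras $\bar g:\mathscr F_\Lambda(M,\mu_M)\to\mathcal B$ with $\mathscr U_\Lambda(\bar g)\circ\eta=g$.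
   Context: $H$ is a frame with bottom $\bot$. An $H$-fuzzy set is a pair $(A,\mu_A)$ of a set $A$ and a function $\mu_A:A\to H$; an arrow $f:(A,\mu_A)\to(B,\mu_B)$ is a function with $\mu_A(x)\le\mu_B(f(x))$; they form $\mathbf{Fuz}_H$. For $n\ge1$, $(A,\mu_A)^n=(A^n,\mu)$ with $\mu(a_1,\dots,a_n)=\bigwedge_i\mu_A(a_i)$. A signature $\Sigma=(O,\mathrm{ar},C)$ consists of a set $O$ of operation symbols with arity $\mathrm{ar}:O\to\{1,2,3,\dots\}$ and a set $C$ of constant symbols. A language is a pair $\mathcal L=(\Sigma,X)$ with $X$ a set of variables. $\mathrm{Terms}(\mathcal L)$ is the smallest set containing $X\sqcup C$ and containing $f(t_1,\dots,t_{\mathrm{ar}(f)})$ whenever $f\in O$ and all $t_i\in\mathrm{Terms}(\mathcal L)$. A formula is either an equation $s\equiv t$ ($s,t$ terms) or a membership proposition $\mathsf E_l(t)$ with $l\in H$ and $t$ a term. A sequent $\Gamma\vdash\psi$ is a pair of a (possibly infinite) set $\Gamma$ of formulas and a formula $\psi$. A fuzzy theory in $\mathcal L$ is a set of sequents. A $\Sigma$-algebra $\mathcal A=((A,\mu_A),\Sigma^{\mathcal A})$ is an $H$-fuzzy set $(A,\mu_A)$ together with, for each $f\in O$, an arrow $f^{\mathcal A}:(A,\mu_A)^{\mathrm{ar}(f)}\to(A,\mu_A)$ of $\mathbf{Fuz}_H$ and, for each $c\in C$, an element $c^{\mathcal A}\in A$. A morphism of $\Sigma$-algebras is an arrow of $\mathbf{Fuz}_H$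 between the carriers preserving all constants and commuting with all operations. An assignment is a function $\iota:X\to A$; evaluation: $x^{\mathcal A,\iota}=\iota(x)$, $c^{\mathcal A,\iota}=c^{\mathcal A}$, $f(t_1,\dots,t_n)^{\mathcal A,\iota}=f^{\mathcal A}(t_1^{\mathcal A,\iota},\dots,t_n^{\mathcal A,\iota})$. $\mathcal A\vDash_\iota s\equiv t$ iff $s^{\mathcal A,\iota}=t^{\mathcal A,\iota}$; $\mathcal A\vDash_\iota\mathsf E_l(t)$ iff $l\le\mu_A(t^{\mathcal A,\iota})$. $\mathcal A$ satisfies $\Gamma\vdash\psi$ if for every assignment $\iota$ with $\mathcal A\vDash_\iota\phi$ for all $\phi\in\Gamma$ one has $\mathcal A\vDash_\iota\psi$. $\mathcal A$ is a model of a theory $\Lambda$ if it satisfies every sequent of $\Lambda$. $\mathbf{Mod}(\Lambda)$ is the full subcategory of the category of $\Sigma$-algebras on the models of $\Lambda$, and $\mathscr U_\Lambda:\mathbf{Mod}(\Lambda)\to\mathbf{Fuz}_H$ is the forgetful functor to carriers. *)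

From mathcomp Require Import all_boot.
Set Implicit Arguments. Unset Strict Implicit. Unset Printing Implicit Defensive.

Record frame := Frame {
  fcar :> Type;
  fle : fcar -> fcar -> Prop;
  fle_refl : forall x, fle x x;
  fle_trans : forall x y z, fle x y -> fle y z -> fle x z;
  fle_antisym : forall x y, fle x y -> fle y x -> x = y;
  fsup : (fcar -> Prop) -> fcar;
  fsup_ub : forall (S : fcar -> Prop) x, S x -> fle x (fsup S);
  fsup_least : forall (S : fcar -> Prop) y,
      (forall x, S x -> fle x y) -> fle (fsup S) y;
  fmeet : fcar -> fcar -> fcar;
  fmeet_lb1 : forall x y, fle (fmeet x y) x;
  fmeet_lb2 : forall x y, fle (fmeet x y) y;
  fmeet_glb : forall x y z, fle z x -> fle z y -> fle z (fmeet x y);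
  fmeet_sup_distr : forall a (S : fcar -> Prop),
      fmeet a (fsup S) = fsup (fun y => exists2 x, S x & y = fmeet a x)
}.

Definition fbot (H : frame) : H := fsup (fun _ : H => False).

Definition finf (H : frame) (S : H -> Prop) : H :=
  fsup (fun l => forall x, S x -> fle l x).

(* the meet  /\_{i < n} a_i  of a finite family (n >= 1 in use) *)
Definition fbigmeet (H : frame) (n : nat) (a : 'I_n -> H) : H :=
  finf (fun x => exists i, x = a i).

Record fuzzy (H : frame) := Fuzzy {
  fz_car :> Type;
  fz_mu : fz_car -> H
}.

Definition is_arrow (H : frame) (A B : fuzzy H) (f : A -> B) : Prop :=
  forall x, fle (fz_mu x) (fz_mu (f x)).

Definition fz_pow (H : frame) (A : fuzzy H) (n : nat) : fuzzy H :=
  @Fuzzy H ('I_n -> A) (fun a => fbigmeet (fun i => fz_mu (a i))).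

Record signature := Signature {
  sig_op : Type;
  sig_ar : sig_op -> nat;
  sig_ar_pos : forall f, 0 < sig_ar f;
  sig_const : Type
}.

Record language := Language {
  lang_sig : signature;
  lang_var : Type
}.

Inductive term (L : language) : Type :=
| TVar : lang_var L -> term L
| TConst : sig_const (lang_sig L) -> term L
| TApp : forall f : sig_op (lang_sig L), ('I_(sig_ar f) -> term L) -> term L.

Inductive formula (H : frame) (L : language) : Type :=
| FEq : term L -> term L -> formula H L
| FMem : H -> term L -> formula H L.

Record sequent (H : frame) (L : language) := Sequent {
  seq_hyps : formula H L -> Prop;
  seq_concl : formula H L
}.

Definition fuzzy_theory (H : frame) (L : language) := sequent H L -> Prop.

Record algebra (H : frame) (S : signature) := Algebra {
  alg_car : fuzzy H;
  alg_op : forall f : sig_op S, ('I_(sig_ar f) -> alg_car) -> alg_car;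
  alg_op_arrow : forall f : sig_op S,
      @is_arrow H (fz_pow alg_car (sig_ar f)) alg_car (@alg_op f);
  alg_const : sig_const S -> alg_car
}.
Arguments alg_op {H S} a f _.
Arguments alg_const {H S} a c.

Definition is_morphism (H : frame) (S : signature) (A B : algebra H S)
    (h : alg_car A -> alg_car B) : Prop :=
  [/\ is_arrow h,
      (forall c, h (alg_const A c) = alg_const B c) &
      (forall f (a : 'I_(sig_ar f) -> alg_car A),
          h (alg_op A f a) = alg_op B f (fun i => h (a i)))].

Fixpoint eval (H : frame) (L : language) (A : algebra H (lang_sig L))
    (iota : lang_var L -> alg_car A) (t : term L) : alg_car A :=
  match t with
  | TVar x => iota x
  | TConst c => alg_const A c
  | TApp f ts => alg_op A f (fun i => @eval H L A iota (ts i))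
  end.
Arguments eval {H L} A iota t.

Definition sat_formula (H : frame) (L : language) (A : algebra H (lang_sig L))
    (iota : lang_var L -> alg_car A) (phi : formula H L) : Prop :=
  match phi with
  | FEq s t => eval A iota s = eval A iota t
  | FMem l t => fle l (fz_mu (eval A iota t))
  end.
Arguments sat_formula {H L} A iota phi.

Definition sat_sequent (H : frame) (L : language) (A : algebra H (lang_sig L))
    (sq : sequent H L) : Prop :=
  forall iota : lang_var L -> alg_car A,
    (forall phi, seq_hyps sq phi -> sat_formula A iota phi) ->
    sat_formula A iota (seq_concl sq).
Arguments sat_sequent {H L} A sq.

Definition is_model (H : frame) (L : language) (Lam : fuzzy_theory H L)
    (A : algebra H (lang_sig L)) : Prop :=
  forall sq, Lam sq -> sat_sequent A sq.

From mathcomp Require Import all_boot.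
From Stdlib Require Import ClassicalEpsilon FunctionalExtensionality PropExtensionality.

Set Implicit Arguments. Unset Strict Implicit.

(* The free model on (M, mu_M) is the term algebra over the generators M,
   quotiented by the least pair (E, D) of an equivalence E on terms and a
   membership degree D : terms -> H that is a congruence, dominates mu_M on
   generators, makes every operation an arrow and validates every sequent of
   Lam.  All these requirements are Horn conditions, so the least such pair
   is the intersection (resp. pointwise infimum) of all of them.  For a model
   B and an arrow g : M -> B, the kernel of the interpretation of terms in B
   is such a pair; hence the interpretation factors through the quotient, and
   uniqueness of the factorization is induction on terms. *)

Lemma finf_lb (H : frame) (S : H -> Prop) x : S x -> fle (finf S) x.
Proof. by move=> Sx; apply: fsup_least => l; apply. Qed.

Lemma finf_glb (H : frame) (S : H -> Prop) l :
  (forall x, S x -> fle l x) -> fle l (finf S).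
Proof. exact: fsup_ub. Qed.

Lemma fbigmeet_mono (H : frame) n (a b : 'I_n -> H) :
  (forall i, fle (a i) (b i)) -> fle (fbigmeet a) (fbigmeet b).
Proof.
move=> le_ab; apply: finf_glb => _ [i ->].
by apply: fle_trans (le_ab i); apply: finf_lb; exists i.
Qed.

Section Quotient.
Variables (T : Type) (R : T -> T -> Prop).

Definition quot := {P : T -> Prop | exists t, P = R t}.

Definition qclass (t : T) : quot := exist _ (R t) (ex_intro _ t erefl).

Definition qrepr (c : quot) : T :=
  proj1_sig (constructive_indefinite_description _ (proj2_sig c)).

Lemma qreprK (c : quot) : qclass (qrepr c) = c.
Proof.
case: c => P ex_P; rewrite /qrepr /=.
case: (constructive_indefinite_description _ ex_P) => t def_P /=.
rewrite /qclass; move: ex_P; rewrite def_P => ex_P.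
by rewrite (proof_irrelevance _ ex_P (ex_intro _ t erefl)).
Qed.

Hypotheses (R_refl : forall t, R t t) (R_sym : forall s t, R s t -> R t s)
  (R_trans : forall s t u, R s t -> R t u -> R s u).

Lemma qclass_eq s t : qclass s = qclass t <-> R s t.
Proof.
split=> [eq_st | Rst].
  by have : proj1_sig (qclass s) t by rewrite eq_st; apply: R_refl.
apply: eq_sig_hprop => [P p q|]; first exact: proof_irrelevance.
apply: functional_extensionality => u; apply: propositional_extensionality.
by split; [apply: R_trans (R_sym Rst) | apply: R_trans Rst].
Qed.

End Quotient.

Inductive gterm (L : language) (T : Type) : Type :=
| GGen : T -> gterm L T
| GConst : sig_const (lang_sig L) -> gterm L T
| GApp : forall f : sig_op (lang_sig L), ('I_(sig_ar f) -> gterm L T) -> gterm L T.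
Arguments GGen {L T} _.
Arguments GConst {L T} _.
Arguments GApp {L T} f _.

Fixpoint subst (L : language) (T : Type) (io : lang_var L -> gterm L T)
    (t : term L) : gterm L T :=
  match t with
  | TVar x => io x
  | TConst c => GConst c
  | TApp f ts => GApp f (fun i => subst io (ts i))
  end.

Section FreeModel.
Variables (H : frame) (L : language) (Lam : fuzzy_theory H L) (M : fuzzy H).

Definition sat_subst (E : gterm L M -> gterm L M -> Prop) (D : gterm L M -> H)
    (io : lang_var L -> gterm L M) (phi : formula H L) : Prop :=
  match phi with
  | FEq s t => E (subst io s) (subst io t)
  | FMem l t => fle l (D (subst io t))
  end.

Record theory_congruence (E : gterm L M -> gterm L M -> Prop)
    (D : gterm L M -> H) : Prop := {
  tc_refl : forall t, E t t;
  tc_sym : forall s t, E s t -> E t s;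
  tc_trans : forall s t u, E s t -> E t u -> E s u;
  tc_cong : forall f ts us,
    (forall i, E (ts i) (us i)) -> E (GApp f ts) (GApp f us);
  tc_compat : forall s t, E s t -> fle (D s) (D t);
  tc_gen : forall m, fle (fz_mu m) (D (GGen m));
  tc_app : forall f ts, fle (fbigmeet (fun i => D (ts i))) (D (GApp f ts));
  tc_sequent : forall sq, Lam sq -> forall io,
    (forall phi, seq_hyps sq phi -> sat_subst E D io phi) ->
    sat_subst E D io (seq_concl sq)
}.

Definition least_eq (s t : gterm L M) : Prop :=
  forall E D, theory_congruence E D -> E s t.

Definition least_mu (t : gterm L M) : H :=
  finf (fun x => exists E D, theory_congruence E D /\ x = D t).

Lemma least_mu_le E D t : theory_congruence E D -> fle (least_mu t) (D t).
Proof. by move=> tcED; apply: finf_lb; exists E, D. Qed.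

Lemma sat_subst_least io phi :
  sat_subst least_eq least_mu io phi ->
  forall E D, theory_congruence E D -> sat_subst E D io phi.
Proof.
case: phi => [s t|l t] /= sat E D tcED; first exact: sat E D tcED.
exact: fle_trans sat (least_mu_le _ tcED).
Qed.

Lemma least_congruence : theory_congruence least_eq least_mu.
Proof.
split.
- by move=> t E D tcED; apply: tc_refl tcED _.
- by move=> s t st E D tcED; apply: tc_sym tcED _ _ (st E D tcED).
- by move=> s t u st tu E D tcED; apply: tc_trans tcED _ _ _ (st E D tcED) (tu E D tcED).
- by move=> f ts us tus E D tcED; apply: tc_cong tcED _ _ _ (fun i => tus i E D tcED).
- move=> s t st; apply: finf_glb => _ [E [D [tcED ->]]].
  exact: fle_trans (least_mu_le _ tcED) (tc_compat tcED (st E D tcED)).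
- by move=> m; apply: finf_glb => _ [E [D [tcED ->]]]; apply: tc_gen tcED m.
- move=> f ts; apply: finf_glb => _ [E [D [tcED ->]]].
  apply: fle_trans (tc_app tcED ts); apply: fbigmeet_mono => i.
  exact: least_mu_le tcED.
- move=> sq Lsq io hyps.
  have concl E D : theory_congruence E D -> sat_subst E D io (seq_concl sq).
    move=> tcED; apply: (tc_sequent tcED Lsq) => phi hyp_phi.
    exact: sat_subst_least (hyps phi hyp_phi) _ _ tcED.
  case: (seq_concl sq) concl => [s t|l t] /= concl; first by move=> E D /concl.
  by apply: finf_glb => _ [E [D [tcED ->]]]; exact: concl tcED.
Qed.

Definition free_class := qclass least_eq.
Definition free_repr := @qrepr _ least_eq.

Lemma free_class_eq s t : free_class s = free_class t <-> least_eq s t.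
Proof.
exact: qclass_eq (tc_refl least_congruence) (tc_sym least_congruence)
  (tc_trans least_congruence) s t.
Qed.

Lemma free_reprK c : free_class (free_repr c) = c.
Proof. exact: qreprK. Qed.

Lemma least_eq_repr_class t : least_eq (free_repr (free_class t)) t.
Proof. by apply/free_class_eq; rewrite free_reprK. Qed.

Lemma least_mu_repr_class t : least_mu (free_repr (free_class t)) = least_mu t.
Proof.
have rt := least_eq_repr_class t.
apply: fle_antisym; apply: (tc_compat least_congruence) => //.
exact: (tc_sym least_congruence).
Qed.

Definition free_fuzzy : fuzzy H :=
  @Fuzzy H (quot least_eq) (fun c => least_mu (free_repr c)).

Definition free_op (f : sig_op (lang_sig L))
    (a : 'I_(sig_ar f) -> free_fuzzy) : free_fuzzy :=
  free_class (GApp f (fun i => free_repr (a i))).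

Lemma free_op_arrow f :
  @is_arrow H (fz_pow free_fuzzy (sig_ar f)) free_fuzzy (@free_op f).
Proof.
move=> a /=; rewrite /free_op least_mu_repr_class.
exact: tc_app least_congruence _ _.
Qed.

Definition free_alg : algebra H (lang_sig L) :=
  @Algebra H (lang_sig L) free_fuzzy free_op free_op_arrow
    (fun c => free_class (GConst c)).

Definition free_unit (m : M) : alg_car free_alg := free_class (GGen m).

Lemma free_class_app f ts :
  free_class (GApp f ts) = alg_op free_alg f (fun i => free_class (ts i)).
Proof.
apply/free_class_eq; apply: (tc_cong least_congruence) => i.
by apply: (tc_sym least_congruence); apply: least_eq_repr_class.
Qed.

Lemma eval_free io t :
  eval free_alg io t = free_class (subst (fun x => free_repr (io x)) t).
Proof.
elim: t => [x|c|f ts IH] //=; first by rewrite free_reprK.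
by rewrite free_class_app; congr (alg_op free_alg f _);
  apply: functional_extensionality.
Qed.

Lemma sat_formula_free io phi :
  sat_formula free_alg io phi <->
  sat_subst least_eq least_mu (fun x => free_repr (io x)) phi.
Proof.
case: phi => [s t|l t] /=; rewrite !eval_free; first exact: free_class_eq.
by rewrite least_mu_repr_class.
Qed.

Lemma free_is_model : is_model Lam free_alg.
Proof.
move=> sq Lsq io hyps; apply/sat_formula_free.
apply: (tc_sequent least_congruence Lsq) => phi hyp_phi.
exact/sat_formula_free/hyps.
Qed.

Lemma free_unit_arrow : is_arrow free_unit.
Proof.
by move=> m /=; rewrite least_mu_repr_class; apply: tc_gen least_congruence m.
Qed.

Section Extension.
Variables (B : algebra H (lang_sig L)) (g : M -> alg_car B).

Fixpoint interp (t : gterm L M) : alg_car B :=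
  match t with
  | GGen m => g m
  | GConst c => alg_const B c
  | GApp f ts => alg_op B f (fun i => interp (ts i))
  end.

Lemma eval_interp io t : eval B (fun x => interp (io x)) t = interp (subst io t).
Proof.
elim: t => [x|c|f ts IH] //=.
by congr (alg_op B f _); apply: functional_extensionality.
Qed.

Hypotheses (model_B : is_model Lam B) (arrow_g : is_arrow g).

Lemma interp_kernel_congruence :
  theory_congruence (fun s t => interp s = interp t) (fun t => fz_mu (interp t)).
Proof.
split=> //=.
- by move=> s t u -> ->.
- by move=> f ts us eq_tus; congr (alg_op B f _); apply: functional_extensionality.
- by move=> s t ->; apply: fle_refl.
- by move=> f ts; apply: (alg_op_arrow (fun i => interp (ts i))).
- move=> sq Lsq io hyps.
  have sat_interp phi : sat_formula B (fun x => interp (io x)) phi <->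
      sat_subst (fun s t => interp s = interp t) (fun t => fz_mu (interp t)) io phi.
    by case: phi => [s t|l t] /=; rewrite !eval_interp.
  by apply/sat_interp/model_B => // phi /hyps/sat_interp.
Qed.

Lemma interp_least_eq s t : least_eq s t -> interp s = interp t.
Proof. by move/(_ _ _ interp_kernel_congruence). Qed.

Definition free_lift (c : alg_car free_alg) : alg_car B := interp (free_repr c).

Lemma free_lift_class t : free_lift (free_class t) = interp t.
Proof. exact: interp_least_eq (least_eq_repr_class t). Qed.

Lemma free_lift_morphism : is_morphism free_lift.
Proof.
split=> [c|c|f a] /=;
  [exact: least_mu_le interp_kernel_congruence | exact: free_lift_class ..].
Qed.

Lemma free_lift_unit m : free_lift (free_unit m) = g m.
Proof. exact: free_lift_class. Qed.

Lemma free_lift_unique h :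
  is_morphism h -> (forall m, h (free_unit m) = g m) -> free_lift = h.
Proof.
case=> _ h_const h_op h_unit.
have h_class t : h (free_class t) = interp t.
  elim: t => [m|c|f ts IH] /=; [exact: h_unit | exact: h_const |].
  rewrite free_class_app h_op; congr (alg_op B f _).
  exact: functional_extensionality.
apply: functional_extensionality => c.
by rewrite -(free_reprK c) h_class free_lift_class.
Qed.

End Extension.
End FreeModel.

Arguments free_unit {H L} Lam {M} m.
Arguments free_lift {H L} Lam {M B} g c.

Theorem theorem33 (H : frame) (L : language) (Lam : fuzzy_theory H L)
    (M : fuzzy H) :
  exists (F : algebra H (lang_sig L)) (eta : M -> alg_car F),
    [/\ is_model Lam F,
        is_arrow eta &
        forall (B : algebra H (lang_sig L)), is_model Lam B ->
        forall g : M -> alg_car B, is_arrow g ->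
        exists! gbar : alg_car F -> alg_car B,
          is_morphism gbar /\ (forall m, gbar (eta m) = g m)].
Proof.
exists (free_alg Lam M), (free_unit Lam); split.
- exact: free_is_model.
- exact: free_unit_arrow.
move=> B model_B g arrow_g; exists (free_lift Lam g); split.
  split; [exact: free_lift_morphism | exact: free_lift_unit].
by move=> h [h_mor h_unit]; apply: free_lift_unique.
Qed.
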